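(* Let $(\Gamma,\gamma)$ be a connected spin network which is not a trivial component, and let $e_0$ be a bridge of $\Gamma$ (an edge whose removal disconnects the graph). If $\gamma(e_0)\neq 0$ then $\langle\Gamma,\gamma\rangle^P=0$.
   Context: A cubic ribbon graph $\Gamma=(G,R)$: $G$ a finite graph with all vertices of degree $3$ (multiple edges and loops allowed, a loop counting $2$; a trivial component is a single edge closing on itself with no vertex), $R$ a cyclic ordering of half-edges at each vertex, determining an embedding in a closed orientable surface. A decoration $\gamma:E(G)\to\{0,1,\dots\}$ is admissible if at each vertex with incident decorations $a,b,c$ (loop counted twice) $a+b+c$ is even and $|a-b|\le c\le a+b$; a spin network is $(\Gamma,\gamma)$ with $\gamma$ admissible. Penrose evaluation: replace each edge $e$ by $\gamma(e)$ parallel strands on the thickened embedded graph; at each vertex join strands without crossings, $\frac{a+b-c}{2}$ between the $a$- and $b$-edges, $\frac{a+c-b}{2}$ between $a,c$, $\frac{b+c-a}{2}$ between $b,c$; insert a permutation $\sigma_e\in\mathfrak S_{\gamma(e)}$ on each edge; $\langle\Gamma,\gamma\rangle^P=\sum_{\vec\sigma}(\prod_e\mathrm{sign}\,\sigma_e)(-2)^{N(\vec\sigma)}$, with $N(\vec\sigma)$ the number of resulting closed curves. *)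

From mathcomp Require Import all_boot all_order all_algebra all_fingroup.
Set Implicit Arguments. Unset Strict Implicit. Unset Printing Implicit Defensive.
Import GRing.Theory Num.Theory.

(* Combinatorial encoding of a cubic ribbon graph without trivial components:
   half-edges are 'I_n; [al] pairs half-edges into edges (fixed-point-free
   involution); [sg] is the cyclic ordering at vertices (vertices = orbits
   of [sg], all of size 3). *)

Definition cubic_ribbon n (al sg : 'I_n -> 'I_n) : Prop :=
  (forall h, al (al h) = h) /\ (forall h, al h <> h) /\
  (forall h, sg (sg (sg h)) = h) /\ (forall h, sg h <> h).

Definition decoration n (al : 'I_n -> 'I_n) (g : 'I_n -> nat) : Prop :=
  forall h, g (al h) = g h.

Definition admissible n (sg : 'I_n -> 'I_n) (g : 'I_n -> nat) : Prop :=
  forall h, let a := g h in let b := g (sg h) in let c := g (sg (sg h)) in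
    ~~ odd (a + b + c) /\ a <= b + c /\ b <= a + c /\ c <= a + b.

Definition gstep n (al sg : 'I_n -> 'I_n) : rel 'I_n :=
  fun x y => (y == sg x) || (y == al x).

Definition connected_graph n (al sg : 'I_n -> 'I_n) : Prop :=
  forall x y, connect (gstep al sg) x y.

Definition gstep_minus n (al sg : 'I_n -> 'I_n) (h0 : 'I_n) : rel 'I_n :=
  fun x y => (y == sg x) || [&& y == al x, x != h0 & x != al h0].

(* the edge {h0, al h0} is a bridge: removing it disconnects the graph,
   i.e. some two vertices (represented by half-edges at them) are no longer
   connected *)
Definition bridge n (al sg : 'I_n -> 'I_n) (h0 : 'I_n) : Prop :=
  exists x y, ~~ connect (gstep_minus al sg h0) x y.

Definition maxdec n (g : 'I_n -> nat) : nat := \max_(h < n) g h.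

(* strand ends: (h, i) with i < g h is the i-th strand end on half-edge h,
   numbered counterclockwise around the vertex of h. Other points of the
   type are inactive and fixed by all maps below. *)
Definition spt n N := ('I_n * 'I_N.+1)%type.

Definition active n N (g : 'I_n -> nat) : pred (spt n N) :=
  fun x => val x.2 < g x.1.

(* planar (non-crossing) junctions at vertices: (a+b-c)/2 strands between
   the a-edge h and the next edge sg h, etc. *)
Definition vmap n N (sg : 'I_n -> 'I_n) (g : 'I_n -> nat) (x : spt n N)
  : spt n N :=
  let h := x.1 in let i := val x.2 in
  let a := g h in let b := g (sg h) in let c := g (sg (sg h)) in
  let k := (a + b - c)./2 in
  if i < a then
    (if a - k <= i then (sg h, inord (a.-1 - i))
     else (sg (sg h), inord (c.-1 - i)))
  else x.

(* families (sigma_e)_e of permutations of the gamma(e) strands of each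
   edge, encoded as one permutation of strand ends acting only on the
   strand ends of the representative half-edge h (h < al h) of each edge,
   preserving each such block. *)
Definition edge_perms n N (al : 'I_n -> 'I_n) (g : 'I_n -> nat)
  : {set {perm spt n N}} :=
  [set s : {perm spt n N} | [forall x : spt n N,
     if (x.1 < al x.1) && (val x.2 < g x.1)
     then ((s x).1 == x.1) && (val (s x).2 < g x.1)
     else s x == x]].

(* connections along edges, with the permutation sigma_e inserted:
   strand i at h (representative) goes to strand a-1-s(i) at al h
   (the ribbon is untwisted, orientation reverses the numbering). *)
Definition emap n N (al : 'I_n -> 'I_n) (g : 'I_n -> nat)
  (s : {perm spt n N}) (x : spt n N) : spt n N :=
  let h := x.1 in let i := val x.2 in let a := g h in
  if i < a then
    (if h < al h then (al h, inord (a.-1 - val (s x).2))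
     else (al h, ((s^-1)%g (al h, inord (a.-1 - i))).2))
  else x.

Definition curve_rel n N al sg g (s : {perm spt n N}) : rel (spt n N) :=
  fun x y => (vmap sg g x == y) || (emap al g s x == y).

Definition ncurves n N al sg g (s : {perm spt n N}) : nat :=
  n_comp (curve_rel al sg g s) [pred x | active g x].

Definition penrose n (al sg : 'I_n -> 'I_n) (g : 'I_n -> nat) : int :=
  let N := maxdec g in
  (\sum_(s in edge_perms N al g)
     ((-1) ^+ odd_perm s * (-2) ^+ ncurves al sg g s))%R.

From mathcomp Require Import all_boot all_order all_algebra all_fingroup.
From mathcomp Require Import zify.
Set Implicit Arguments. Unset Strict Implicit. Unset Printing Implicit Defensive.
Import GRing.Theory Num.Theory.

(* The Penrose sum is killed by a sign-reversing involution on the families of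
   edge permutations.  Cut the bridge e0 = {h0, al h0}: on the strand ends, the
   vertex junctions and the remaining edge connections are two involutions, the
   first without fixed points, so the component of the first end p0 on h0
   contains an even number of ends left unmatched by the second, i.e. lying on
   h0 or al h0.  As e0 is a bridge, none lies on al h0, so a second end q on h0
   is joined to p0 without crossing e0.  Composing sigma_e0 with the
   transposition (p0 q) flips the sign, leaves the cut graph (hence the choice
   of q) unchanged, and keeps the number of closed curves, since p0 and q
   already lie on a common curve. *)

Lemma connect_sym_from_steps (T : finType) (e : rel T) :
  (forall x y, e x y -> connect e y x) -> connect_sym e.
Proof.
move=> e_rev; apply: symmetric_from_pre => x y /(connect_sub (e' := [rel x y | e y x])).
rewrite (connect_rev e x y); apply=> u v /e_rev.
by rewrite (connect_rev e u v).
Qed.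

Lemma connect_homo (T U : finType) (f : T -> U) (e : rel T) (e' : rel U) :
  (forall x y, e x y -> connect e' (f x) (f y)) ->
  forall x y, connect e x y -> connect e' (f x) (f y).
Proof.
move=> fe x _ /connectP[p p_e ->]; elim: p x p_e => //= y p IHp x.
by case/andP=> /fe xy /IHp; apply: connect_trans.
Qed.

Lemma odd_card_involution (T : finType) (f : T -> T) (A : {set T}) :
  {homo f : x / x \in A} -> {in A, involutive f} ->
  odd #|A| = odd #|[set x in A | f x == x]|.
Proof.
elim: {A}_.+1 {-2}A (ltnSn #|A|) => // m IH A ltAm fA fK.
have [->|[x Ax]] := set_0Vmem A.
  by congr odd; apply: eq_card => y; rewrite !inE.
set D := [set x; f x]; set B := A :\: D.
have sDA : D \subset A by apply/subsetP => y; rewrite !inE => /orP[]/eqP->; rewrite ?fA.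
have fB : {homo f : y / y \in B}.
  move=> y; rewrite !inE negb_or => /andP[/andP[yx yfx] Ay].
  rewrite fA // andbT; apply/norP; split.
    by apply: contra_neq yfx => <-; rewrite fK.
  by apply: contra_neq yx => E; rewrite -(fK y Ay) E fK.
have ltBm : #|B| < m.
  rewrite (cardsD1 x A) Ax add1n ltnS in ltAm; apply: leq_ltn_trans ltAm.
  by apply/subset_leq_card/setDS; rewrite sub1set !inE eqxx.
have oddB : odd #|B| = odd #|[set y in B | f y == y]|.
  by apply: IH => // y; rewrite inE => /andP[_]; apply: fK.
rewrite -(cardsID D A) (setIidPr sDA) oddD -/B oddB.
rewrite -(cardsID D [set y in A | f y == y]) oddD; congr (_ (+) odd _).
  rewrite cards2; have [fxx|fxx] := eqVneq x (f x).
    rewrite (_ : _ :&: D = [set x]) ?cards1 //; apply/setP => y.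
    rewrite !inE -fxx orbb; have [->|] := eqVneq y x; last by rewrite andbF.
    by rewrite Ax -fxx !eqxx.
  rewrite (_ : _ :&: D = set0) ?cards0 //; apply/setP => y; rewrite !inE.
  apply/negP => /andP[/andP[Ay /eqP fy] /orP[]/eqP yE]; move: fy fxx; rewrite yE.
    by move=> ->; rewrite eqxx.
  by rewrite fK // => {1}->; rewrite eqxx.
by apply: eq_card => y; rewrite !inE andbA.
Qed.

Section SignReversingInvolution.
Local Open Scope ring_scope.

Lemma sumr_sign_reversing_eq0 (R : numDomainType) (I : finType) (A : {pred I})
    (phi : I -> I) (F : I -> R) :
  involutive phi -> (forall i, (phi i \in A) = (i \in A)) ->
  (forall i, i \in A -> F (phi i) = - F i) -> \sum_(i in A) F i = 0.
Proof.
move=> phiK Aphi Fphi; set S := \sum_(i in A) F i.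
have SN : S = - S.
  rewrite {1}/S (reindex_inj (can_inj phiK)) /= -sumrN.
  by apply: eq_big => [i | i]; [exact: Aphi | rewrite Aphi => /Fphi].
have : S *+ 2 == 0 by rewrite mulr2n {1}SN addNr.
by rewrite mulrn_eq0 => /eqP.
Qed.

End SignReversingInvolution.

Section Bridge.
Variables (n : nat) (al sg : 'I_n -> 'I_n).
Hypotheses (alK : involutive al) (sg3 : forall h, sg (sg (sg h)) = h).

Lemma gstep_minus_al h0 : gstep_minus al sg (al h0) =2 gstep_minus al sg h0.
Proof. by move=> x y; rewrite /gstep_minus alK (andbC (x != al h0)). Qed.

Lemma gstep_minus_connect_sym h0 : connect_sym (gstep_minus al sg h0).
Proof.
apply: connect_sym_from_steps => x y /orP[/eqP->|/and3P[/eqP-> xh0 xah0]].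
  by apply: (@connect_trans _ _ (sg (sg x))); apply: connect1;
    rewrite /gstep_minus ?sg3 eqxx.
apply: connect1; rewrite /gstep_minus alK eqxx orbC /=.
by rewrite -{1}(alK h0) !(inj_eq (can_inj alK)) xh0 xah0.
Qed.

Lemma bridge_disconnects h0 : connected_graph al sg -> bridge al sg h0 ->
  ~~ connect (gstep_minus al sg h0) h0 (al h0).
Proof.
move=> conn [x [y]]; apply: contra => h0_ah0; apply: connect_sub (conn x y) => u v.
case/orP=> /eqP->; first by apply: connect1; rewrite /gstep_minus eqxx.
have [->|uh0] := eqVneq u h0; first exact: h0_ah0.
have [->|uah0] := eqVneq u (al h0).
  by rewrite alK gstep_minus_connect_sym.
by apply: connect1; rewrite /gstep_minus eqxx uh0 uah0 orbT.
Qed.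

End Bridge.

Section Strands.
Variables (n : nat) (al sg : 'I_n -> 'I_n) (g : 'I_n -> nat).
Hypotheses (alK : involutive al) (alN : forall h, al h <> h).
Hypotheses (sg3 : forall h, sg (sg (sg h)) = h) (sgN : forall h, sg h <> h).
Hypotheses (g_al : decoration al g) (g_adm : admissible sg g).

Local Notation N := (maxdec g).
Local Notation strand := (spt n N).
Local Notation EP := (edge_perms N al g).
Implicit Types (x : strand) (s : {perm strand}).

Lemma leq_maxdec h : g h <= N.
Proof. exact: leq_bigmax. Qed.

Lemma sg2N h : sg (sg h) <> h.
Proof. by move=> E; apply: (@sgN h); rewrite -{1}E sg3. Qed.

Lemma junction_sizes h :
  let a := g h in let b := g (sg h) in let c := g (sg (sg h)) in
  [/\ a <= b + c, b <= a + c, c <= a + b & ((a + b - c)./2).*2 = a + b - c].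
Proof.
have [even_abc [le_a [le_b le_c]]] := g_adm h; split => //.
by rewrite halfK oddB // -oddD (negbTE even_abc) subn0.
Qed.

Lemma vmapK : involutive (@vmap n N sg g).
Proof.
case=> h i; rewrite [vmap _ _ (h, i)]/vmap /=.
have [le_a le_b le_c k2] := junction_sizes h.
have [_ _ _ k2'] := junction_sizes (sg h).
have [_ _ _ k2''] := junction_sizes (sg (sg h)).
rewrite !sg3 in k2' k2''.
have := leq_maxdec h; have := leq_maxdec (sg h); have := leq_maxdec (sg (sg h)).
set a := g h in le_a le_b le_c k2 k2' k2'' *.
set b := g (sg h) in le_a le_b le_c k2 k2' k2'' *.
set c := g (sg (sg h)) in le_a le_b le_c k2 k2' k2'' * => Nc Nb Na.
case: ifPn => ia; last by rewrite /vmap /= -/a (negbTE ia).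
case: ifPn => ik; rewrite /vmap /= sg3 -/a -/b -/c inordK; try lia.
- rewrite ifT; last by lia.
  by rewrite ifF; [congr pair; apply: val_inj; rewrite /= inordK | ]; lia.
- rewrite ifT; last by lia.
  by rewrite ifT; [congr pair; apply: val_inj; rewrite /= inordK | ]; lia.
Qed.

Lemma vmap_inactive x : ~~ active g x -> vmap sg g x = x.
Proof. by rewrite /vmap /active => /negbTE ->. Qed.

Lemma vmap_active x : active g x ->
  active g (vmap sg g x) /\ (vmap sg g x).1 != x.1.
Proof.
case: x => h i; rewrite /active /vmap /= => ia.
have [le_a le_b le_c k2] := junction_sizes h.
have := leq_maxdec h; have := leq_maxdec (sg h); have := leq_maxdec (sg (sg h)).
rewrite ia; case: ifPn => ik /= Nc Nb Na; rewrite inordK; try lia.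
  by split; [lia | apply/eqP; exact: sgN].
by split; [lia | apply/eqP; exact: sg2N].
Qed.

Lemma vmap_vertex x : [\/ (vmap sg g x).1 = x.1, (vmap sg g x).1 = sg x.1
                         | (vmap sg g x).1 = sg (sg x.1)].
Proof.
rewrite /vmap; case: ifP => _; last by constructor 1.
by case: ifP => _; [constructor 2 | constructor 3].
Qed.

Definition rep_strand x := (x.1 < al x.1) && active g x.

Lemma edge_perm_fix s x : s \in EP -> ~~ rep_strand x -> s x = x.
Proof.
rewrite inE => /forallP/(_ x); case: ifP => [x_rep _ /negP[] | _ /eqP //].
exact: x_rep.
Qed.

Lemma edge_perm_rep s x : s \in EP -> rep_strand x ->
  (s x).1 = x.1 /\ active g (s x).
Proof.
rewrite inE => /forallP/(_ x); rewrite /rep_strand /active => + /andP[hx ix].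
by rewrite hx ix => /andP[/eqP-> ->].
Qed.

Lemma edge_perm_half s x : s \in EP -> (s x).1 = x.1.
Proof.
move=> sP; have [/(edge_perm_rep sP)[]//|xN] := boolP (rep_strand x).
by rewrite edge_perm_fix.
Qed.

Lemma edge_permV_half s x : s \in EP -> ((s^-1)%g x).1 = x.1.
Proof. by move=> sP; rewrite -{2}(permKV s x) (edge_perm_half _ sP). Qed.

Lemma edge_permV_active s x : s \in EP -> rep_strand x -> active g ((s^-1)%g x).
Proof.
move=> sP x_rep; set y := (s^-1)%g x; have sy : s y = x by rewrite permKV.
have [/andP[] //|yN] := boolP (rep_strand y).
by move: x_rep; rewrite -sy edge_perm_fix // => /andP[].
Qed.

Lemma emap_inactive s x : ~~ active g x -> emap al g s x = x.
Proof. by rewrite /emap /active => /negbTE ->. Qed.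

Lemma emap_edge s x : (emap al g s x).1 = x.1 \/ (emap al g s x).1 = al x.1.
Proof. by rewrite /emap; case: ifP => _; [case: ifP => _; right | left]. Qed.

Lemma al_rep (h : 'I_n) : ~~ (h < al h) -> al h < al (al h).
Proof.
rewrite alK -leqNgt => le_al_h; rewrite ltn_neqAle le_al_h andbT.
by apply/eqP => /val_inj; exact: alN.
Qed.

Lemma rep_strand_opposite (h : 'I_n) (i : nat) : ~~ (h < al h) -> i < g h ->
  rep_strand ((al h, inord ((g h).-1 - i)) : strand).
Proof.
move=> /al_rep ah_rep ih; have Nh := leq_maxdec h.
by rewrite /rep_strand /active /= ah_rep g_al /= inordK; lia.
Qed.

Lemma emap_active s x : s \in EP -> active g x ->
  active g (emap al g s x) /\ (emap al g s x).1 = al x.1.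
Proof.
move=> sP; case: x => h i; rewrite /active /emap /= => ia.
have := leq_maxdec h; rewrite ia; case: ifPn => [h_rep | h_nrep] Nh /=.
  by rewrite g_al inordK; [split => //; lia | lia].
split => //; have := edge_permV_active sP (rep_strand_opposite h_nrep ia).
by rewrite /active (edge_permV_half _ sP) /= g_al.
Qed.

Lemma emapK s : s \in EP -> involutive (emap al g s).
Proof.
move=> sP [h i]; rewrite [emap _ _ _ (h, i)]/emap /=.
case: ifPn => ia; last by rewrite /emap /= (negbTE ia).
have Nh := leq_maxdec h.
case: ifPn => [h_rep | h_nrep].
- have [sx1 sx_act] := edge_perm_rep sP (ltac:(exact/andP) : rep_strand (h, i)).
  rewrite /emap /= g_al inordK; last by lia.
  rewrite ifT; last by lia.
  rewrite alK ltnNge ltnW //= (_ : (h, inord _) = s (h, i)) ?permK //.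
  move: sx1 sx_act; case: (s (h, i)) => /= h' j ->; rewrite /active /= => j_lt.
  by congr pair; apply: val_inj; rewrite /= inordK; lia.
- have := edge_permV_active sP (rep_strand_opposite h_nrep ia).
  have := edge_permV_half (al h, inord ((g h).-1 - i)) sP.
  rewrite /active /emap /= g_al (al_rep h_nrep) alK.
  set w := (s^-1)%g _ => w1 w_act; rewrite w1 g_al in w_act; rewrite w_act.
  rewrite (_ : (al h, w.2) = w); last by case: w w1 {w_act} => /= ? ? ->.
  rewrite permKV /= inordK; last by lia.
  by congr pair; apply: val_inj; rewrite /= inordK; lia.
Qed.

Lemma active_vmap x : active g (vmap sg g x) = active g x.
Proof.
have [x_act|x_inact] := boolP (active g x); first by case: (vmap_active x_act).
by rewrite vmap_inactive // (negbTE x_inact).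
Qed.

Lemma active_emap s x : s \in EP -> active g (emap al g s x) = active g x.
Proof.
move=> sP; have [x_act|x_inact] := boolP (active g x).
  by case: (emap_active sP x_act).
by rewrite emap_inactive // (negbTE x_inact).
Qed.

Variable h0 : 'I_n.

Definition cut_emap s x :=
  if (x.1 != h0) && (x.1 != al h0) then emap al g s x else x.

Definition cut_rel s : rel strand :=
  fun x y => (vmap sg g x == y) || (cut_emap s x == y).

Lemma off_cut_edge_al h :
  (al h != h0) && (al h != al h0) = (h != h0) && (h != al h0).
Proof.
by rewrite andbC (can_eq alK); congr (_ && _); rewrite -{1}(alK h0) (can_eq alK).
Qed.

Lemma cut_emapK s : s \in EP -> involutive (cut_emap s).
Proof.
move=> sP x; rewrite [cut_emap s x]/cut_emap; case: ifP => off.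
  have [x_act|x_inact] := boolP (active g x); last first.
    by rewrite emap_inactive // /cut_emap off emap_inactive.
  have [_ ex1] := emap_active sP x_act.
  by rewrite /cut_emap ex1 off_cut_edge_al off emapK.
by rewrite /cut_emap off.
Qed.

Lemma cut_rel_sym s : s \in EP -> symmetric (cut_rel s).
Proof.
move=> sP x y; rewrite /cut_rel (inv_eq vmapK) (inv_eq (cut_emapK sP)).
by rewrite (eq_sym x) (eq_sym x).
Qed.

Lemma cut_rel_active s : s \in EP -> closed (cut_rel s) (active g).
Proof.
move=> sP x y; change (cut_rel s x y -> active g x = active g y).
case/orP=> /eqP<-; first by rewrite active_vmap.
by rewrite /cut_emap; case: ifP => // _; rewrite active_emap.
Qed.

Lemma cut_rel_minus s x y : cut_rel s x y -> connect (gstep_minus al sg h0) x.1 y.1.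
Proof.
have sg_step h : connect (gstep_minus al sg h0) h (sg h).
  by apply: connect1; rewrite /gstep_minus eqxx.
case/orP=> /eqP<-.
  case: (vmap_vertex x) => ->; [exact: connect0 | exact: sg_step |].
  exact: connect_trans (sg_step _) (sg_step _).
rewrite /cut_emap; case: ifP => off; last exact: connect0.
case: (emap_edge s x) => ->; first exact: connect0.
by apply: connect1; rewrite /gstep_minus eqxx off orbT.
Qed.

Definition cut_partner s p q :=
  [&& connect (cut_rel s) p q, cut_emap s q == q & q != p].

Lemma cut_partner_exists s p : s \in EP -> p.1 = h0 -> active g p ->
  exists q, cut_partner s p q.
Proof.
move=> sP p1 p_act; set O := [set y | connect (cut_rel s) p y].
have vmap_step y : cut_rel s y (vmap sg g y) by rewrite /cut_rel eqxx.
have cut_step y : cut_rel s y (cut_emap s y) by rewrite /cut_rel eqxx orbT.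
have stepO f : (forall y, cut_rel s y (f y)) -> {homo f : y / y \in O}.
  by move=> fs y; rewrite !inE => py; apply: connect_trans py (connect1 (fs y)).
have O_act y : y \in O -> active g y.
  rewrite inE => py; change (y \in active g).
  by rewrite -(closed_connect (cut_rel_active sP) py).
have vfix0 : [set y in O | vmap sg g y == y] = set0.
  apply/setP => y; rewrite inE in_set0; apply/negbTE/andP => -[Oy /eqP vy].
  by case: (vmap_active (O_act y Oy)); rewrite vy eqxx.
have := odd_card_involution (stepO _ vmap_step) (in1W vmapK).
rewrite vfix0 cards0 => evenO.
have := odd_card_involution (stepO _ cut_step) (in1W (cut_emapK sP)).
set F := [set y in O | cut_emap s y == y] => oddF.
have pF : p \in F by rewrite !inE connect0 /cut_emap p1 eqxx /= eqxx.
have : 0 < #|F :\ p|.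
  by move: oddF; rewrite evenO (cardsD1 p F) pF; case: #|F :\ p|.
case/card_gt0P => q; rewrite !inE => /andP[qp /andP[Oq eq]].
by exists q; rewrite /cut_partner Oq eq qp.
Qed.

Hypothesis h0_bridge : ~~ connect (gstep_minus al sg h0) h0 (al h0).

Lemma cut_partner_end s p q : s \in EP -> p.1 = h0 -> active g p ->
  cut_partner s p q -> q.1 = h0 /\ active g q.
Proof.
move=> sP p1 p_act /and3P[pq /eqP fix_q _].
have q_act : active g q.
  by change (q \in active g); rewrite -(closed_connect (cut_rel_active sP) pq).
split => //; move: fix_q; rewrite /cut_emap; case: ifP => [_ emap_q | ].
  by have [_] := emap_active sP q_act; rewrite emap_q => /esym/alN [].
move/negbT; rewrite negb_and !negbK => /orP[/eqP // | /eqP q1].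
have := connect_homo (f := fun x => x.1) (@cut_rel_minus s) pq.
by rewrite p1 q1 (negbTE h0_bridge).
Qed.

Lemma cut_rel_curve s : subrel (connect (cut_rel s)) (connect (curve_rel al sg g s)).
Proof.
apply: connect_sub => x y /orP[]/eqP<-.
  by apply: connect1; rewrite /curve_rel eqxx.
rewrite /cut_emap; case: ifP => _; last exact: connect0.
by apply: connect1; rewrite /curve_rel eqxx orbT.
Qed.

Hypothesis h0_rep : h0 < al h0.

Section Swap.
Variables (p q : strand).
Hypotheses (p1 : p.1 = h0) (q1 : q.1 = h0) (p_act : active g p) (q_act : active g q).
Local Notation t := (tperm p q).

Lemma swap_half x : (t x).1 = x.1.
Proof. by case: tpermP => // ->; rewrite ?p1 ?q1. Qed.

Lemma swap_active x : active g (t x) = active g x.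
Proof. by case: tpermP => // ->; rewrite ?p_act ?q_act. Qed.

Lemma swap_rep x : rep_strand (t x) = rep_strand x.
Proof. by rewrite /rep_strand swap_half swap_active. Qed.

Lemma swap_off x : x.1 != h0 -> t x = x.
Proof. by case: tpermP => // ->; rewrite ?p1 ?q1 eqxx. Qed.

Lemma swap_inactive x : ~~ active g x -> t x = x.
Proof. by case: tpermP => // ->; rewrite ?p_act ?q_act. Qed.

Lemma swap_nonrep x : ~~ rep_strand x -> t x = x.
Proof. by case: tpermP => // ->; rewrite /rep_strand ?p1 ?q1 h0_rep ?p_act ?q_act. Qed.

Lemma edge_perms_swap s : s \in EP -> (t * s)%g \in EP.
Proof.
move=> sP; rewrite inE; apply/forallP => x; rewrite permM.
case: ifP => x_rep.
  have tx_rep : rep_strand (t x) by rewrite swap_rep; exact: x_rep.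
  have [sx1] := edge_perm_rep sP tx_rep.
  by rewrite /active sx1 swap_half eqxx.
by rewrite swap_nonrep ?(edge_perm_fix sP) // /rep_strand /active x_rep.
Qed.

Lemma emap_swap_off s x : s \in EP -> x.1 != h0 -> x.1 != al h0 ->
  emap al g (t * s)%g x = emap al g s x.
Proof.
move=> sP x_h0 x_ah0; rewrite /emap permM swap_off // invMg tpermV permM swap_off //.
by rewrite (edge_permV_half _ sP) /= -{1}(alK h0) (can_eq alK).
Qed.

Lemma cut_emap_swap s : s \in EP -> cut_emap (t * s)%g =1 cut_emap s.
Proof.
by move=> sP x; rewrite /cut_emap; case: ifP => // /andP[]; apply: emap_swap_off.
Qed.

Lemma cut_rel_swap s : s \in EP -> cut_rel (t * s)%g =2 cut_rel s.
Proof. by move=> sP x y; rewrite /cut_rel cut_emap_swap. Qed.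

Lemma emap_swap_h0 s x : s \in EP -> x.1 = h0 ->
  emap al g (t * s)%g x = emap al g s (t x).
Proof.
move=> sP x1; have [x_act|x_inact] := boolP (active g x); last first.
  by rewrite !emap_inactive ?swap_active // swap_inactive.
have tx_act := x_act; rewrite -swap_active in tx_act.
by move: x_act tx_act; rewrite /emap /active permM swap_half x1 h0_rep => -> ->.
Qed.

Lemma emap_swap_ah0 s x : s \in EP -> x.1 = al h0 ->
  emap al g (t * s)%g x = t (emap al g s x).
Proof.
move=> sP x1; have [x_act|x_inact] := boolP (active g x); last first.
  by rewrite !emap_inactive // swap_inactive.
move: x_act; rewrite /emap /active => ->.
rewrite x1 alK ltnNge ltnW //= invMg tpermV permM.
set w := (s^-1)%g _; have w1 : w.1 = h0 by rewrite /w (edge_permV_half _ sP).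
have -> : (h0, w.2) = w by case: w w1 => ? ? /= ->.
by rewrite -w1 -(swap_half w); case: (t w).
Qed.

Lemma curve_rel_swap s : s \in EP -> connect (cut_rel s) p q ->
  subrel (curve_rel al sg g (t * s)%g) (connect (curve_rel al sg g s)).
Proof.
move=> sP pq; have to_swap x : connect (curve_rel al sg g s) x (t x).
  case: tpermP => [->|->|_ _]; last exact: connect0.
    exact: cut_rel_curve.
  by apply: cut_rel_curve; rewrite (sym_connect_sym (cut_rel_sym sP)).
have emap_step x : connect (curve_rel al sg g s) x (emap al g s x).
  by apply: connect1; rewrite /curve_rel eqxx orbT.
move=> x y /orP[]/eqP<-; first by apply: connect1; rewrite /curve_rel eqxx.
have [x1|x_h0] := eqVneq x.1 h0.
  by rewrite emap_swap_h0 //; apply: connect_trans (to_swap x) (emap_step _).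
have [x1|x_ah0] := eqVneq x.1 (al h0).
  by rewrite emap_swap_ah0 //; apply: connect_trans (emap_step x) (to_swap _).
by rewrite emap_swap_off.
Qed.

Lemma ncurves_swap s : s \in EP -> connect (cut_rel s) p q ->
  ncurves al sg g (t * s)%g = ncurves al sg g s.
Proof.
move=> sP pq; have tsP := edge_perms_swap sP.
have tpq : connect (cut_rel (t * s)%g) p q by rewrite (eq_connect (cut_rel_swap sP)).
rewrite /ncurves; apply: eq_n_comp => x y; apply/idP/idP.
  exact: (connect_sub (curve_rel_swap sP pq)).
by rewrite -{1}(tpermKg p q s); apply: (connect_sub (curve_rel_swap tsP tpq)).
Qed.

End Swap.

Hypothesis h0_active : 0 < g h0.

Definition base_strand : strand := (h0, inord 0).

Lemma base_strand_half : base_strand.1 = h0.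
Proof. by []. Qed.

Lemma base_strand_active : active g base_strand.
Proof. by rewrite /active /= inordK. Qed.

Definition partner s := odflt base_strand [pick q | cut_partner s base_strand q].

Lemma partnerP s : s \in EP -> let q := partner s in
  [/\ q.1 = h0, active g q, q != base_strand & connect (cut_rel s) base_strand q].
Proof.
move=> sP; rewrite /partner; case: pickP => [q qP | no_q]; last first.
  have [q] := cut_partner_exists sP base_strand_half base_strand_active.
  by rewrite no_q.
have [q1 q_act] := cut_partner_end sP base_strand_half base_strand_active qP.
by case/and3P: qP.
Qed.

Definition swap_partner s :=
  if s \in EP then (tperm base_strand (partner s) * s)%g else s.

Lemma partner_swap s : s \in EP ->
  partner (tperm base_strand (partner s) * s)%g = partner s.
Proof.
move=> sP; have [q1 _ _ _] := partnerP sP.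
rewrite /partner; congr odflt; apply: eq_pick => x.
rewrite /cut_partner (eq_connect (cut_rel_swap base_strand_half q1 sP)).
by rewrite (cut_emap_swap base_strand_half q1 sP).
Qed.

Lemma swap_partner_in s : (swap_partner s \in EP) = (s \in EP).
Proof.
rewrite /swap_partner; case: ifP => // sP; have [q1 q_act _ _] := partnerP sP.
exact: (edge_perms_swap base_strand_half q1 base_strand_active q_act sP).
Qed.

Lemma swap_partnerK : involutive swap_partner.
Proof.
move=> s; have := swap_partner_in s; rewrite /swap_partner.
case: ifPn => [sP -> | sN]; last by rewrite (negbTE sN).
by rewrite partner_swap // tpermKg.
Qed.

Lemma penrose_eq0 : penrose al sg g = 0%R.
Proof.
apply: (sumr_sign_reversing_eq0 swap_partnerK swap_partner_in) => s sP.
have [q1 q_act q_base base_q] := partnerP sP.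
rewrite /swap_partner sP ncurves_swap ?base_strand_active //.
rewrite odd_permM odd_tperm eq_sym q_base /=.
by case: (odd_perm s); rewrite /= ?expr0 ?expr1 ?mulN1r ?mul1r ?opprK.
Qed.

End Strands.

Theorem lemma4 (n : nat) (al sg : 'I_n -> 'I_n) (g : 'I_n -> nat) (h0 : 'I_n) :
  cubic_ribbon al sg ->
  decoration al g ->
  admissible sg g ->
  connected_graph al sg ->
  bridge al sg h0 ->
  g h0 <> 0 ->
  penrose al sg g = 0%R.
Proof.
move=> [alK [alN [sg3 sgN]]] g_al g_adm conn h0_bridge /eqP; rewrite -lt0n.
(* sigma_e0 acts at the representative half-edge of e0, so take h0 to be it *)
wlog h0_rep : h0 h0_bridge / h0 < al h0.
  move=> W; have [|ah0_rep|/val_inj h0_al] := ltngtP h0 (al h0); first exact: W.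
    rewrite -g_al; apply: W; last by rewrite alK.
    case: h0_bridge => x [y]; exists x, y.
    by rewrite (eq_connect (gstep_minus_al sg alK h0)).
  by case: (alN h0).
move=> h0_active; have h0_cut := bridge_disconnects alK sg3 conn h0_bridge.
exact: (penrose_eq0 alK alN sg3 sgN g_al g_adm h0_cut h0_rep h0_active).
Qed.
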